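(* Let $p(x,y)$ and $q(x,y)$ be real homogeneous polynomials in two variables of the same degree $j>1$, not both identically zero. If $$\frac{\partial p}{\partial x}+\frac{\partial q}{\partial y}=0 \qquad\text{and}\qquad \frac{\partial p}{\partial x}\frac{\partial q}{\partial y}-\frac{\partial p}{\partial y}\frac{\partial q}{\partial x}=0$$ identically on $\mathbb{R}^2$, then there exist $\alpha,\beta,\zeta\in\mathbb{R}$ with $\alpha^2+\beta^2\neq 0$ and $\zeta\neq 0$ such that $$p(x,y)=\zeta\alpha(\beta x-\alpha y)^j,\qquad q(x,y)=\zeta\beta(\beta x-\alpha y)^j.$$ *)

From HB Require Import structures.
From mathcomp Require Import all_boot all_order all_algebra.
From mathcomp Require Import reals.
From mathcomp Require Export mpoly.

From HB Require Import structures.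
From mathcomp Require Import all_boot all_order all_algebra.
From mathcomp Require Import reals.
From mathcomp Require Import mpoly.
From mathcomp Require Import ring.
Import Order.TTheory GRing.Theory Num.Theory.

(* Setting y = 1 identifies a j-homogeneous P(x, y) with the polynomial
   P(t, 1); it turns d/dx into d/dt and, by Euler's relation
   x P_x + y P_y = j P, turns P_y into j P - t P'.  For f = p(t, 1) and
   g = q(t, 1) the hypotheses become f' = t g' - j g and f' g = f g'.
   A vanishing Wronskian forces f = mu g, and then (t - mu) g' = j g forces
   g = c (t - mu)^j; homogenizing back gives (alpha, beta) = (mu, 1), or
   (1, 0) when q = 0. *)

Set Implicit Arguments.
Unset Strict Implicit.
Unset Printing Implicit Defensive.

Local Open Scope ring_scope.

Section DerivNum.
Variable R : numDomainType.
Implicit Types p : {poly R}.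

Lemma size_deriv_num p : size p^`() = (size p).-1.
Proof.
rewrite /deriv; case sp: (size p) => [|[|n]] /=;
  try by apply/eqP; rewrite -leqn0 size_poly.
have : lead_coef p != 0 by rewrite lead_coef_eq0 -size_poly_eq0 sp.
by rewrite lead_coefE sp => lp0; rewrite size_poly_eq // mulrn_eq0.
Qed.

Lemma lead_coef_deriv_num p : lead_coef p^`() = lead_coef p *+ (size p).-1.
Proof.
rewrite lead_coefE size_deriv_num coef_deriv lead_coefE.
by case sp: (size p) => [|[|n]] //=; rewrite nth_default ?sp.
Qed.

End DerivNum.

Section Wronskian.
Variable R : numFieldType.
Implicit Types f g : {poly R}.

Lemma wronskian_eq0_size f g : f != 0 -> g != 0 ->
  f^`() * g = f * g^`() -> size f = size g.
Proof.
move=> f0 g0 /(congr1 lead_coef); rewrite !lead_coefM !lead_coef_deriv_num.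
rewrite mulrnAl mulrnAr => /mulrIn.
rewrite mulf_neq0 ?lead_coef_eq0 // => /(_ isT) eq_deg.
by rewrite (polySpred f0) (polySpred g0) eq_deg.
Qed.

Lemma size_sub_lead_scale f g : g != 0 -> size f = size g ->
  (size (f - (lead_coef f / lead_coef g) *: g)%R < size g)%N.
Proof.
move=> g0 sfg; rewrite (polySpred g0) ltnS; apply/leq_sizeP => k.
rewrite leq_eqVlt => /orP[/eqP <- | lt_k]; rewrite coefB coefZ.
  by rewrite -lead_coefE -sfg -lead_coefE divfK ?lead_coef_eq0 ?subrr.
have le_gk : (size g <= k)%N by rewrite (polySpred g0).
by rewrite !nth_default ?sfg // mulr0 subrr.
Qed.

Lemma wronskian_eq0_scale f g : g != 0 -> f^`() * g = f * g^`() ->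
  exists mu, f = mu *: g.
Proof.
move=> g0 W; have [->|f0] := eqVneq f 0; first by exists 0; rewrite scale0r.
exists (lead_coef f / lead_coef g); apply/eqP; rewrite -subr_eq0.
set h := f - _ *: g; apply: contraT => h0.
have Wh : h^`() * g = h * g^`().
  by rewrite derivB derivZ !mulrBl W -!scalerAl [g^`() * g]mulrC.
have := size_sub_lead_scale g0 (wronskian_eq0_size f0 g0 W).
by rewrite -/h (wronskian_eq0_size h0 g0 Wh) ltnn.
Qed.

End Wronskian.

Section Euler.
Variable R : numDomainType.
Implicit Types g : {poly R}.

Lemma euler_eq_Xn g j : 'X * g^`() = g *+ j -> g = g`_j *: 'X^j.
Proof.
move=> E; apply/polyP => k; rewrite coefZ coefXn.
case: eqP => [<-|ne_kj]; first by rewrite mulr1.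
rewrite mulr0; have [//|gk0] := eqVneq g`_k 0.
have := congr1 (fun p : {poly R} => p`_k) E; rewrite coefXM coefMn.
case: k ne_kj gk0 => [|k] ne_kj gk0 /=.
  by move/esym/eqP; rewrite mulrn_eq0 (negbTE gk0) orbF => /eqP j0; case: ne_kj.
by rewrite coef_deriv => /(mulrIn gk0).
Qed.

Lemma euler_eq_XsubC_exp g (mu : R) j : ('X - mu%:P) * g^`() = g *+ j ->
  exists c, g = c *: ('X - mu%:P) ^+ j.
Proof.
move=> E; pose G := g \Po ('X + mu%:P).
have shiftK : ('X - mu%:P) \Po ('X + mu%:P) = 'X.
  by rewrite comp_polyB comp_polyX comp_polyC addrK.
have EG : 'X * G^`() = G *+ j.
  rewrite deriv_comp derivD derivX derivC addr0 mulr1 -{1}shiftK -comp_polyM E.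
  exact: raddfMn.
have -> : g = G \Po ('X - mu%:P).
  by rewrite -comp_polyA comp_polyD comp_polyX comp_polyC subrK comp_polyXr.
by exists G`_j; rewrite {1}(euler_eq_Xn EG) comp_polyZ comp_Xn_poly.
Qed.

End Euler.

Lemma wronskian_euler_solution (R : realFieldType) j (f g : {poly R}) :
  (f != 0) || (g != 0) ->
  f^`() + (g *+ j - 'X * g^`()) = 0 -> f^`() * g = f * g^`() ->
  exists alpha beta zeta : R,
    [/\ alpha ^+ 2 + beta ^+ 2 != 0, zeta != 0,
        f = (zeta * alpha) *: (beta *: 'X - alpha%:P) ^+ j
      & g = (zeta * beta) *: (beta *: 'X - alpha%:P) ^+ j].
Proof.
move=> nz D W; have [g0|g0] := eqVneq g 0.
  move: nz D; rewrite g0 eqxx orbF deriv0 mulr0 mul0rn subr0 addr0 => f0 f'0.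
  have /eqP := congr1 (size : {poly R} -> nat) f'0.
  rewrite size_deriv_num size_poly0 -subn1 subn_eq0 => /size1_polyC f_const.
  rewrite f_const polyC_eq0 in f0.
  have sgn0 : (-1) ^+ j != 0 :> R by rewrite signr_eq0.
  exists 1, 0, (f`_0 / (-1) ^+ j); split.
  - by rewrite expr1n expr0n addr0 oner_eq0.
  - by rewrite mulf_neq0 ?invr_eq0.
  - by rewrite mulr1 scale0r sub0r -polyCN -rmorphXn -mul_polyC -polyCM divfK.
  - by rewrite mulr0 scale0r.
have [mu fE] := wronskian_eq0_scale g0 W.
have [c gE] : exists c, g = c *: ('X - mu%:P) ^+ j.
  apply: euler_eq_XsubC_exp; apply/eqP.
  by rewrite eq_sym -subr_eq0 -D fE derivZ -mul_polyC; apply/eqP; ring.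
exists mu, 1, c; split.
- by rewrite expr1n gt_eqF // ltr_wpDl ?sqr_ge0 ?ltr01.
- by apply: contra g0 => /eqP c0; rewrite gE c0 scale0r.
- by rewrite scale1r fE gE scalerA mulrC.
- by rewrite scale1r gE mulr1.
Qed.

Section Dehomogenize.
Variable R : numDomainType.
Implicit Types (P Q : {mpoly R[2]}) (m : 'X_{1..2}).

Definition dehomog : {mpoly R[2]} -> {poly R} :=
  mmap (@polyC R) (fun i : 'I_2 => if i == 0 then 'X else 1).

HB.instance Definition _ := GRing.RMorphism.on dehomog.

Lemma dehomogZ c P : dehomog (c *: P) = c *: dehomog P.
Proof. by rewrite /dehomog mmapZ mul_polyC. Qed.

Lemma dehomogXm m : dehomog 'X_[m] = 'X^(m 0).
Proof.
by rewrite /dehomog mmapX /mmap1 !big_ord_recl big_ord0 /= expr1n !mulr1.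
Qed.

Lemma dehomogX0 : dehomog 'X_0 = 'X.
Proof. by rewrite /dehomog mmapX mmap1U. Qed.

Lemma dehomogX1 : dehomog 'X_1 = 1.
Proof. by rewrite /dehomog mmapX mmap1U. Qed.

Lemma horner_dehomog P t :
  (dehomog P).[t] = P.@[fun i : 'I_2 => if i == 0 then t else 1].
Proof.
elim/mpolyind: P => [|c m P _ _ IH]; first by rewrite raddf0 horner0 meval0.
rewrite raddfD /= hornerD IH mevalD dehomogZ hornerZ dehomogXm hornerXn.
by rewrite mevalZ mevalX !big_ord_recl big_ord0 /= expr1n !mulr1.
Qed.

Lemma dehomog_eq0 P : (forall v : 'I_2 -> R, P.@[v] = 0) -> dehomog P = 0.
Proof.
move=> P0; pose ns : seq R := [seq i%:R | i <- iota 0 (size (dehomog P))].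
apply: (@roots_geq_poly_eq0 _ _ ns); last by rewrite size_map size_iota.
  by apply/allP => x /mapP[i _ ->]; rewrite /root horner_dehomog P0.
by rewrite map_inj_uniq ?iota_uniq // => a b /eqP; rewrite eqr_nat => /eqP.
Qed.

Lemma dehomog_mderiv0 P : dehomog P^`M(0) = (dehomog P)^`().
Proof.
elim/mpolyind: P => [|c m P _ _ IH]; first by rewrite mderiv0 raddf0 deriv0.
rewrite mderivD !raddfD /= IH mderivZ mderivX !dehomogZ !dehomogXm.
by rewrite derivZ derivXn mnmBE mnm1E eqxx subn1 scaler_nat.
Qed.

Lemma mdeg2 m : mdeg m = (m 0%R + m 1%R)%N.
Proof.
rewrite mdegE !big_ord_recl big_ord0 addn0.
by congr (m _ + m _)%N; apply: val_inj.
Qed.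

Lemma dehomog_mderiv1_monomial c m :
  dehomog (c *: 'X_[m])^`M(1) =
  dehomog (c *: 'X_[m]) *+ mdeg m - 'X * (dehomog (c *: 'X_[m]))^`().
Proof.
rewrite mderivZ mderivX !dehomogZ !dehomogXm derivZ derivXn mnmBE mnm1E /=.
have XXn : 'X * ('X^((m 0).-1) *+ m 0) = 'X^(m 0) *+ m 0 :> {poly R}.
  by case: (m 0) => [|k]; rewrite ?mulr0n ?mulr0 // mulrnAr -exprS.
rewrite subn0 mdeg2 scaler_nat -scalerAr scalerMnr -scalerBr XXn.
by rewrite mulrnDr addrAC subrr add0r.
Qed.

Lemma dehomog_mderiv1 P j : P \is j.-homog ->
  dehomog P^`M(1) = dehomog P *+ j - 'X * (dehomog P)^`().
Proof.
move=> hP; rewrite (mpolyE P) (raddf_sum (mderiv 1)) !(raddf_sum dehomog).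
rewrite raddf_sum /= -sumrMnl mulr_sumr -sumrB.
apply: eq_big_seq => m mP.
by rewrite -(dhomog_mf hP mP) dehomog_mderiv1_monomial.
Qed.

Lemma mnm2_eq m1 m2 : mdeg m1 = mdeg m2 -> m1 0 = m2 0 -> m1 = m2.
Proof.
rewrite !mdeg2 => eq_deg eq0; apply/mnmP => i.
have [->|->] : i = 0 \/ i = 1.
  by case: i => [[|[|//]] ?]; [left|right]; apply: val_inj.
  by [].
by apply/eqP; rewrite -(eqn_add2l (m1 0)) eq_deg eq0.
Qed.

Lemma coef_dehomog P j m : P \is j.-homog -> mdeg m = j ->
  (dehomog P)`_(m 0) = P@_m.
Proof.
move=> hP dm; rewrite {1}(mpolyE P) raddf_sum coef_sum /=.
under eq_bigr do rewrite dehomogZ dehomogXm coefZ coefXn.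
rewrite [in RHS](mpolyE P) raddf_sum /=; apply: eq_big_seq => m' m'P.
rewrite mcoeffZ mcoeffX; congr (_ * (nat_of_bool _)%:R).
apply/eqP/eqP => [eq0|-> //]; apply: mnm2_eq => //.
by rewrite dm (dhomog_mf hP m'P).
Qed.

Lemma dehomog_inj P Q j : P \is j.-homog -> Q \is j.-homog ->
  dehomog P = dehomog Q -> P = Q.
Proof.
move=> hP hQ eqPQ; apply/mpolyP => m; have [dm|dm] := eqVneq (mdeg m) j.
  by rewrite -(coef_dehomog hP dm) -(coef_dehomog hQ dm) eqPQ.
by rewrite !(dhomog_nemf_coeff _ dm).
Qed.

Lemma dehomog_eq0_homog P j : P \is j.-homog -> (dehomog P == 0) = (P == 0).
Proof.
move=> hP; apply/eqP/eqP => [|->]; last exact: raddf0.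
by rewrite -(raddf0 dehomog); apply: dehomog_inj hP (dhomog0 _ _ _).
Qed.

Lemma dehomog_jacobian P Q j : P \is j.-homog -> Q \is j.-homog ->
  dehomog (P^`M(0) * Q^`M(1) - P^`M(1) * Q^`M(0)) =
  ((dehomog P)^`() * dehomog Q - dehomog P * (dehomog Q)^`()) *+ j.
Proof.
move=> hP hQ; rewrite rmorphB !rmorphM /= !dehomog_mderiv0.
by rewrite (dehomog_mderiv1 hP) (dehomog_mderiv1 hQ); ring.
Qed.

Lemma dhomog_linear_exp (a b : R) j :
  (b *: 'X_0 - a *: 'X_1 : {mpoly R[2]}) ^+ j \is j.-homog.
Proof.
have hL : (b *: 'X_0 - a *: 'X_1 : {mpoly R[2]}) \is 1.-homog.
  by rewrite rpredB // dhomogZ // dhomogX /= mdeg1.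
by have := dhomogMn j hL; rewrite mul1n.
Qed.

Lemma dehomog_linear_exp (a b : R) j :
  dehomog ((b *: 'X_0 - a *: 'X_1) ^+ j) = (b *: 'X - a%:P) ^+ j.
Proof.
by rewrite rmorphXn rmorphB /= !dehomogZ dehomogX0 dehomogX1 alg_polyC.
Qed.

End Dehomogenize.

Theorem lemma1 (R : realType) (j : nat) (p q : {mpoly R[2]}) :
  (1 < j)%N ->
  p \is j.-homog -> q \is j.-homog ->
  (p != 0) || (q != 0) ->
  (forall v : 'I_2 -> R, (p^`M(0) + q^`M(1)).@[v] = 0) ->
  (forall v : 'I_2 -> R,
      (p^`M(0) * q^`M(1) - p^`M(1) * q^`M(0)).@[v] = 0) ->
  exists alpha beta zeta : R,
    [/\ alpha ^+ 2 + beta ^+ 2 != 0, zeta != 0,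
        p = (zeta * alpha) *: (beta *: 'X_0 - alpha *: 'X_1) ^+ j
      & q = (zeta * beta) *: (beta *: 'X_0 - alpha *: 'X_1) ^+ j].
Proof.
move=> j_gt1 hp hq pq_neq0 div0 jac0.
have div : (dehomog p)^`() + (dehomog q *+ j - 'X * (dehomog q)^`()) = 0.
  by rewrite -dehomog_mderiv0 -(dehomog_mderiv1 hq) -rmorphD /= dehomog_eq0.
have W : (dehomog p)^`() * dehomog q = dehomog p * (dehomog q)^`().
  have /eqP := dehomog_eq0 jac0; rewrite (dehomog_jacobian hp hq) -scaler_nat.
  by rewrite scaler_eq0 pnatr_eq0 gtn_eqF 1?ltnW //= subr_eq0 => /eqP.
have fg_neq0 : (dehomog p != 0) || (dehomog q != 0).
  by rewrite (dehomog_eq0_homog hp) (dehomog_eq0_homog hq).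
have [a [b [z [ab_neq0 z_neq0 pE qE]]]] :=
  wronskian_euler_solution fg_neq0 div W.
pose L : {mpoly R[2]} := (b *: 'X_0 - a *: 'X_1) ^+ j.
have hL c : c *: L \is j.-homog by apply/dhomogZ/dhomog_linear_exp.
exists a, b, z; split=> //.
  by apply: (dehomog_inj hp (hL _)); rewrite dehomogZ dehomog_linear_exp.
by apply: (dehomog_inj hq (hL _)); rewrite dehomogZ dehomog_linear_exp.
Qed.
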